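(* Let $I$ be a finite set, $T$ a tree on $I$, and fix a nice total order on $\mathcal{V}(T)$ with associated edge-labeling $\lambda$. For each $F \in [\hat{0},T]\setminus\{T\}$ there exists a unique $G\in[\hat{0},T]$ covering $F$ such that $\lambda(F,G) = \min(\mathcal{V}(T)\setminus\mathcal{V}(F))$.
   Context: A tree on a finite set $I$ is a (non-planar) rooted binary tree whose leaves are bijectively labeled by $I$: vertices are inner vertices (valence $3$) and leaves and the root (valence $1$), edges oriented towards the root; one-leaf trees are allowed. A forest on $I$ is a set of trees whose leaf sets partition $I$; $\mathcal{V}(F)$ is its set of inner vertices. For forests $F,G$ on $I$, $F \leq G$ if there is a continuous map $F\to G$ which (D1) is increasing with respect to orientation towards the root, (D2) maps inner vertices to inner vertices injectively, (D3) is the identity of $I$ on leaves, (D4) is injective on each tree of $F$. This gives the poset $\operatorname{For}(I)$, graded by the number of inner vertices, with minimum $\hat{0}$ (no inner vertices). For $F \leq G \leq T$ the inner vertices are regarded, via these maps, as subsets $\mathcal{V}(F)\subseteq\mathcal{V}(G)\subseteq\mathcal{V}(T)$; if $G$ covers $F$ there is a unique $v$ with $\mathcal{V}(G)=\mathcal{V}(F)\cup\{v\}$. Partial order on $\mathcal{V}(T)$: $v \preceq v'$ if $v'$ lies on the path between the root and $v$. A nice total order is any total order on $\mathcal{V}(T)$ extending $\preceq$; using it, the inner vertices are labeled $1,\dots,n$ increasingly and identified with their labels (min is taken in this order). The edge-labeling $\lambda$ is defined for $F\lhd G$ in $[\hat{0},T]$ by $\mathcal{V}(G)=\mathcal{V}(F)\cup\{\lambda(F,G)\}$.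 *)

From mathcomp Require Import all_boot.
Set Implicit Arguments. Unset Strict Implicit. Unset Printing Implicit Defensive.

(* Rooted binary trees with leaves labeled by I (planar representatives; the
   order of children plays no role since forests are only compared via the
   maps of (D1)-(D4)). *)
Inductive btree (I : Type) : Type :=
| Leaf of I
| Node of btree I & btree I.
Arguments Leaf {I}.
Arguments Node {I}.

Section Forests.
Variable I : finType.

Fixpoint leaves (t : btree I) : seq I :=
  match t with Leaf i => [:: i] | Node l r => leaves l ++ leaves r end.

Definition forest := seq (btree I).
Definition is_forest (F : forest) : Prop :=
  forall i : I, count_mem i (flatten (map leaves F)) = 1%N.

(* vertices of a forest: (index of the tree, position = path from its root;
   false = left child, true = right child) *)
Definition vtx := (nat * seq bool)%type.

Fixpoint subt (t : btree I) (p : seq bool) : option (btree I) :=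
  match p with
  | [::] => Some t
  | b :: p' => match t with
               | Leaf _ => None
               | Node l r => subt (if b then r else l) p'
               end
  end.

Definition subF (F : forest) (v : vtx) : option (btree I) :=
  obind (fun t => subt t v.2) (onth F v.1).

Definition is_inner (F : forest) (v : vtx) : bool :=
  if subF F v is Some (Node _ _) then true else false.

Definition child (v : vtx) (b : bool) : vtx := (v.1, rcons v.2 b).

Definition strict_below (u v : vtx) : Prop :=
  u.1 = v.1 /\ prefix v.2 u.2 /\ (size v.2 < size u.2)%N.

(* the vertex of G to which the child c of F is sent: psi c if c is inner,
   the leaf of G with the same label if c is a leaf (D3) *)
Definition target (F G : forest) (psi : vtx -> vtx) (c u : vtx) : Prop :=
  (is_inner F c /\ u = psi c) \/
  (exists i : I, subF F c = Some (Leaf i) /\ subF G u = Some (Leaf i)).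

(* combinatorial content of a continuous map F -> G satisfying (D1)-(D4):
   psi is its restriction to inner vertices. *)
Definition embeds (F G : forest) (psi : vtx -> vtx) : Prop :=
  (forall w, is_inner F w -> is_inner G (psi w)) /\
  (forall w w', is_inner F w -> is_inner F w' -> psi w = psi w' -> w = w') /\
  (* (D1) increasing: each edge is sent to an upward path *)
  (forall w b u, is_inner F w -> target F G psi (child w b) u ->
     strict_below u (psi w)) /\
  (* (D4) injectivity on each tree: the two children of w are sent into
     different branches below psi w *)
  (forall w u0 u1, is_inner F w ->
     target F G psi (child w false) u0 -> target F G psi (child w true) u1 ->
     nth false u0.2 (size (psi w).2) != nth false u1.2 (size (psi w).2)).

Definition fle (F G : forest) : Prop := exists psi, embeds F G psi.

Definition flt (F G : forest) : Prop := fle F G /\ ~ fle G F.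

Definition fcovers (F G : forest) : Prop :=
  flt F G /\
  ~ (exists H, is_forest H /\ flt F H /\ flt H G).

(* V(F), regarded as a set of inner vertices (positions) of the tree T via
   the map F -> T *)
Definition inV (T : btree I) (F : forest) (v : seq bool) : Prop :=
  exists psi, embeds F [:: T] psi /\
    exists w, is_inner F w /\ psi w = (0%N, v).

Definition innerT (T : btree I) (v : seq bool) : bool := is_inner [:: T] (0%N, v).

(* a nice total order on V(T): the list of the inner vertices of T labeled
   1..n increasingly, such that v comes before v' whenever v' lies strictly
   on the path between v and the root *)
Definition nice_order (T : btree I) (ord : seq (seq bool)) : Prop :=
  uniq ord /\ (forall v, (v \in ord) = innerT T v) /\
  (forall v v', v \in ord -> v' \in ord -> prefix v' v -> v != v' ->
     (index v ord < index v' ord)%N).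

End Forests.

From mathcomp Require Import all_boot zify.
From Stdlib Require Import Classical ClassicalEpsilon.
(* A forest F below T embeds into T in only one way, and is thereby described by a
   configuration: the positions in T of its inner vertices, and which position is a child of
   which.  Conversely every configuration is realized by a forest, and F <= G amounts to the
   inclusion of the vertex sets together with every edge of F being a path of G.
   Since m is minimal in a nice order, all inner vertices of T below m are already in F.  So
   in a G above F with V(G) = V(F) + {m}, the children of m are those of T, and the vertices
   of F above a child of m lie on a single path through m: the configuration of G is forced.
   This gives G and its uniqueness; it covers F because a forest comparable to F (or G) with
   the same vertices is equivalent to it. *)

Set Implicit Arguments. Unset Strict Implicit. Unset Printing Implicit Defensive.

Definition holds (P : Prop) : bool := if excluded_middle_informative P then true else false.

Lemma holdsP (P : Prop) : reflect P (holds P).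
Proof. by rewrite /holds; case: excluded_middle_informative => H; constructor. Qed.

Section Prefix.
Variable A : eqType.
Implicit Types (s t u : seq A) (x y : A).

Definition proper_prefix s t := prefix s t && (size s < size t).

Lemma prefix_cat_nth x0 s t : prefix s t -> size s < size t ->
  t = s ++ nth x0 t (size s) :: drop (size s).+1 t.
Proof.
move=> /prefixP [[|x r] ->]; first by rewrite cats0 ltnn.
by rewrite nth_cat ltnn subnn /= -add1n -drop_drop drop_size_cat //= drop0.
Qed.

Lemma prefix_nth x0 s t n : prefix s t -> n < size s -> nth x0 t n = nth x0 s n.
Proof. by move=> /prefixP [r ->] Hn; rewrite nth_cat Hn. Qed.

Lemma prefix_total s t u : prefix s u -> prefix t u -> prefix s t \/ prefix t s.
Proof.
rewrite !prefixE => /eqP Hs /eqP Ht; case: (leqP (size s) (size t)) => Hst.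
  by left; rewrite -{1}Ht -take_min (minn_idPl Hst) Hs.
by right; rewrite -{1}Hs -take_min (minn_idPl (ltnW Hst)) Ht.
Qed.

Lemma prefix_size_inj s t u : prefix s u -> prefix t u -> size s = size t -> s = t.
Proof. by rewrite !prefixE => /eqP Hs /eqP Ht Hsz; rewrite -Hs -Ht Hsz. Qed.

Lemma prefix_of_size s t u : prefix s u -> prefix t u -> size s <= size t -> prefix s t.
Proof.
move=> Hs Ht Hst; case: (prefix_total Hs Ht) => // Hts.
by rewrite (@prefix_size_inj s t u) ?prefix_refl //; apply/eqP; rewrite eqn_leq Hst size_prefix.
Qed.

Lemma prefix_rcons_size s t x : prefix s (rcons t x) -> size s <= size t -> prefix s t.
Proof. by rewrite !prefixE -cats1 => /eqP Hs Hst; rewrite -{2}Hs takel_cat. Qed.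

Lemma proper_prefix_trans s t u :
  proper_prefix s t -> proper_prefix t u -> proper_prefix s u.
Proof.
move=> /andP [Hst Hsz] /andP [Htu Htz]; rewrite /proper_prefix (prefix_trans Hst Htu).
exact: ltn_trans Htz.
Qed.

Lemma prefix_neq_proper s t : prefix s t -> t <> s -> proper_prefix s t.
Proof.
move=> Hst Hne; rewrite /proper_prefix Hst ltn_neqAle size_prefix // andbT.
by apply/eqP => Hsz; apply: Hne; move: Hst; rewrite prefixE Hsz take_size => /eqP.
Qed.

Lemma rcons_prefixP x0 s t x :
  prefix (rcons s x) t <-> proper_prefix s t /\ nth x0 t (size s) = x.
Proof.
split=> [H|[/andP [Hst Hsz] <-]].
  have Hst := prefix_trans (prefix_rcons s x) H; have := size_prefix H.
  rewrite size_rcons => Hsz; rewrite /proper_prefix Hst Hsz (prefix_nth x0 H) ?size_rcons //.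
  by rewrite nth_rcons ltnn eqxx.
by rewrite {2}(prefix_cat_nth x0 Hst Hsz) -cat_rcons prefix_prefix.
Qed.

Lemma prefix_rcons_inj s t x y : prefix (rcons s x) t -> prefix (rcons s y) t -> x = y.
Proof. by move=> /(rcons_prefixP x) [_ <-] /(rcons_prefixP x) [_ <-]. Qed.

Lemma fork_uniq s s' a c x y x' y' :
  prefix (rcons s x) a -> prefix (rcons s y) c -> x != y ->
  prefix (rcons s' x') a -> prefix (rcons s' y') c -> x' != y' -> s = s'.
Proof.
have fork_prefix r r' z w : prefix (rcons r z) a -> prefix (rcons r w) c -> z != w ->
    prefix r' a -> prefix r' c -> prefix r r' -> r = r'.
  move=> /(rcons_prefixP z) [_ Hza] /(rcons_prefixP z) [_ Hwc] Hzw Hr'a Hr'c Hrr'.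
  case: (ltnP (size r) (size r')) => Hsz.
    by move: Hzw; rewrite -Hza -Hwc (prefix_nth _ Hr'a Hsz) (prefix_nth _ Hr'c Hsz) eqxx.
  by move: Hrr'; rewrite prefixE take_oversize // => /eqP.
move=> Hxa Hyc Hxy Hx'a Hy'c Hx'y'.
have prefix_of_rcons (r d : seq A) z : prefix (rcons r z) d -> prefix r d.
  by apply: prefix_trans; apply: prefix_rcons.
case: (prefix_total (prefix_of_rcons _ _ _ Hxa) (prefix_of_rcons _ _ _ Hx'a)) => Hss'.
  exact: fork_prefix Hxa Hyc Hxy (prefix_of_rcons _ _ _ Hx'a) (prefix_of_rcons _ _ _ Hy'c) Hss'.
exact/esym/(fork_prefix _ _ _ _ Hx'a Hy'c Hx'y' (prefix_of_rcons _ _ _ Hxa)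
  (prefix_of_rcons _ _ _ Hyc) Hss').
Qed.

End Prefix.

Section Trees.
Variable I : finType.
Implicit Types (t : btree I) (X Y Z : forest I) (w v u : vtx) (p q : seq bool).

Definition child_tree (b : bool) t : option (btree I) :=
  if t is Node l r then Some (if b then r else l) else None.

Lemma subt_cat t p q : subt t (p ++ q) = obind (fun s => subt s q) (subt t p).
Proof. by elim: p t => [|b p IH] [i|l r] //=. Qed.

Lemma subt_nil t : subt t [::] = Some t.
Proof. by case: t. Qed.

Lemma subt_rcons t p b : subt t (rcons p b) = obind (child_tree b) (subt t p).
Proof. by rewrite -cats1 subt_cat; case: (subt t p) => [[i|l r]|] //=; rewrite subt_nil. Qed.

Lemma subF_child X w b : subF X (child w b) = obind (child_tree b) (subF X w).
Proof. by rewrite /subF /=; case: (onth X w.1) => //= t; apply: subt_rcons. Qed.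

Lemma is_innerP X w : reflect (exists l r, subF X w = Some (Node l r)) (is_inner X w).
Proof.
rewrite /is_inner; case: (subF X w) => [[i|l r]|]; constructor; try by case=> ? [].
by exists l, r.
Qed.

Lemma inner_subF X w : is_inner X w -> exists s, subF X w = Some s.
Proof. by move/is_innerP => [l [r ->]]; exists (Node l r). Qed.

Lemma is_inner_parent X w b s : subF X (child w b) = Some s -> is_inner X w.
Proof. by rewrite subF_child /is_inner; case: (subF X w) => [[]|]. Qed.

Lemma inner_child_subF X w b : is_inner X w -> exists s, subF X (child w b) = Some s.
Proof. by move/is_innerP => [l [r Hw]]; rewrite subF_child Hw; eexists. Qed.

Lemma child_inj w w' b b' : child w b = child w' b' -> w = w' /\ b = b'.
Proof. by case: w w' => [j p] [j' p'] [-> /rcons_inj [-> ->]]. Qed.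

Lemma subt_reaches_leaf t p s :
  subt t p = Some s -> exists r i, subt t (p ++ r) = Some (Leaf i).
Proof.
elim: s p => [i|l IHl r _] p Hp; first by exists [::], i; rewrite cats0.
have Hl : subt t (rcons p false) = Some l by rewrite subt_rcons Hp.
have [r' [i Hi]] := IHl _ Hl.
by exists (false :: r'), i; rewrite -cat_rcons.
Qed.

Lemma subF_reaches_leaf X v s :
  subF X v = Some s -> exists r i, subF X (v.1, v.2 ++ r) = Some (Leaf i).
Proof. by rewrite /subF; case: (onth X v.1) => //= t /subt_reaches_leaf. Qed.

Fixpoint find_leaf t (i : I) : option (seq bool) :=
  match t with
  | Leaf j => if j == i then Some [::] else None
  | Node l r => if find_leaf l i is Some p then Some (false :: p)
                else omap (cons true) (find_leaf r i)
  end.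

Lemma find_leaf_subt t i p : find_leaf t i = Some p -> subt t p = Some (Leaf i).
Proof.
elim: t p => [j|l IHl r IHr] p /=; first by case: eqP => // -> [<-].
case: (find_leaf l i) IHl => [q|] IHl; first by case=> <-; apply: IHl.
by case: (find_leaf r i) IHr => [q|] //= IHr [<-]; apply: IHr.
Qed.

Lemma find_leaf_mem t i : i \in leaves t -> exists p, find_leaf t i = Some p.
Proof.
elim: t => [j|l IHl r IHr] /=; first by rewrite inE => /eqP ->; rewrite eqxx; eexists.
rewrite mem_cat => /orP [/IHl [p ->]|/IHr [p ->]]; first by eexists.
by case: (find_leaf l i); eexists.
Qed.

Lemma subt_leaf_count t p i : subt t p = Some (Leaf i) -> 0 < count_mem i (leaves t).
Proof.
elim: t p => [j|l IHl r IHr] [|b p] //=; first by case=> ->; rewrite eqxx.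
by rewrite count_cat addn_gt0; case: b => /= H; [rewrite (IHr _ H) orbT|rewrite (IHl _ H)].
Qed.

Lemma subt_leaf_count2 t p p' i : p != p' ->
  subt t p = Some (Leaf i) -> subt t p' = Some (Leaf i) -> 1 < count_mem i (leaves t).
Proof.
elim: t p p' => [j|l IHl r IHr] [|b p] [|b' p'] //=.
rewrite eqseq_cons count_cat; case: b; case: b' => /= Hpp' H H'.
- exact: leq_trans (IHr _ _ Hpp' H H') (leq_addl _ _).
- exact: leq_add (subt_leaf_count H') (subt_leaf_count H).
- exact: leq_add (subt_leaf_count H) (subt_leaf_count H').
- exact: leq_trans (IHl _ _ Hpp' H H') (leq_addr _ _).
Qed.

Lemma forest_leaf_subF X i :
  i \in flatten (map (@leaves I) X) -> exists w, subF X w = Some (Leaf i).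
Proof.
elim: X => [|t X IH] //=; rewrite mem_cat => /orP [/find_leaf_mem [p Hp]|/IH [[j p] Hw]].
  by exists (0, p); apply: find_leaf_subt.
by exists (j.+1, p).
Qed.

Lemma forest_leaf_ex X i : is_forest X -> exists w, subF X w = Some (Leaf i).
Proof. by move=> /(_ i) HX; apply: forest_leaf_subF; rewrite -has_pred1 has_count HX. Qed.

Lemma subF_leaf_count X w i :
  subF X w = Some (Leaf i) -> 0 < count_mem i (flatten (map (@leaves I) X)).
Proof.
case: w => j p; elim: X j => [|t X IH] [|j] //=; rewrite count_cat addn_gt0.
  by rewrite /subF /= => /subt_leaf_count ->.
by move=> H; rewrite (IH j H) orbT.
Qed.

Lemma subF_leaf_count2 X w w' i : w != w' ->
  subF X w = Some (Leaf i) -> subF X w' = Some (Leaf i) ->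
  1 < count_mem i (flatten (map (@leaves I) X)).
Proof.
case: w w' => j p [j' p']; elim: X j j' => [|t X IH] [|j] [|j'] //=;
  rewrite /subF /= count_cat => Hww' H H'.
- rewrite xpair_eqE eqxx /= in Hww'.
  exact: leq_trans (subt_leaf_count2 Hww' H H') (leq_addr _ _).
- exact: leq_add (subt_leaf_count H) (@subF_leaf_count X (j', p') i H').
- exact: leq_add (subt_leaf_count H') (@subF_leaf_count X (j, p) i H).
- rewrite xpair_eqE eqSS in Hww'.
  have := IH j j'; rewrite xpair_eqE Hww' => /(_ isT H H') Hcount.
  exact: leq_trans Hcount (leq_addl _ _).
Qed.

Lemma forest_leaf_uniq X w w' i : is_forest X ->
  subF X w = Some (Leaf i) -> subF X w' = Some (Leaf i) -> w = w'.
Proof.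
move=> /(_ i) /eqP HX Hw Hw'; apply/eqP; apply: contraTT HX => Hww'.
by rewrite neq_ltn (subF_leaf_count2 Hww' Hw Hw') orbT.
Qed.

Lemma target_subF X Y psi c u : target X Y psi c u -> exists s, subF X c = Some s.
Proof. by case=> [[/inner_subF]|[i [-> _]]] //; eexists. Qed.

Lemma strict_below_split v y : strict_below v y ->
  v = (y.1, y.2 ++ nth false v.2 (size y.2) :: drop (size y.2).+1 v.2).
Proof. by case: v y => [j p] [j' q] [/= -> [Hp Hs]]; rewrite -(prefix_cat_nth false Hp Hs). Qed.

Lemma strict_below_child w b : strict_below (child w b) w.
Proof. by rewrite /strict_below /= prefix_rcons size_rcons ltnSn. Qed.

Lemma strict_below_trans u v w : strict_below u v -> strict_below v w -> strict_below u w.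
Proof.
move=> [E1 [P1 S1]] [E2 [P2 S2]]; split; first by rewrite E1.
by split; [exact: prefix_trans P2 P1 | exact: ltn_trans S2 S1].
Qed.

(* (D1) propagates along paths *)
Lemma target_subtree X Y psi y g r u : embeds X Y psi -> is_inner X y ->
  target X Y psi (y.1, y.2 ++ g :: r) u ->
  exists u', target X Y psi (child y g) u' /\ u.1 = u'.1 /\ prefix u'.2 u.2.
Proof.
move=> [_ [_ [D1 _]]] Hy; elim/last_ind: r u => [|r d IH] u.
  by move=> Hu; exists u; rewrite /child -cats1 prefix_refl.
rewrite -rcons_cons -rcons_cat => Hu.
have Hv : is_inner X (y.1, y.2 ++ g :: r).
  by have [s Hs] := target_subF Hu; apply: (@is_inner_parent X _ d s).
have [E1 [E2 _]] := D1 _ d _ Hv Hu.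
have [u' [Hu' [E1' E2']]] := IH _ (or_introl (conj Hv erefl)).
by exists u'; rewrite E1 E1'; split=> //; split=> //; apply: prefix_trans E2' E2.
Qed.

Lemma target_comp X Y Z a b c u : is_forest Y -> embeds X Y a ->
  target X Z (fun w => b (a w)) c u -> exists v, target X Y a c v /\ target Y Z b v u.
Proof.
move=> HY [A2 _] [[Hc ->]|[i [Hc Hu]]].
  by exists (a c); split; left; split=> //; apply: A2.
have [v Hv] := forest_leaf_ex i HY.
by exists v; split; right; exists i.
Qed.

Lemma embeds_comp X Y Z a b : is_forest Y -> embeds X Y a -> embeds Y Z b ->
  embeds X Z (fun w => b (a w)).
Proof.
move=> HY Ha Hb; have [A2 [A2i [A1 A4]]] := Ha; have [B2 [B2i [B1 B4]]] := Hb.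
have key w g u : is_inner X w -> target X Z (fun w => b (a w)) (child w g) u ->
    exists v u', [/\ target X Y a (child w g) v,
      target Y Z b (child (a w) (nth false v.2 (size (a w).2))) u',
      strict_below u' (b (a w)), u.1 = u'.1 & prefix u'.2 u.2].
  move=> Hw Hu; have [v [Hv1 Hv2]] := target_comp HY Ha Hu.
  have Hsb := A1 _ _ _ Hw Hv1; rewrite (strict_below_split Hsb) in Hv2.
  have [u' [Hu' [E1 E2]]] := target_subtree Hb (A2 _ Hw) Hv2.
  by exists v, u'; split=> //; apply: B1 _ _ _ (A2 _ Hw) Hu'.
split; [|split; [|split]].
- by move=> w Hw; apply/B2/A2.
- by move=> w w' Hw Hw' /B2i E; apply: A2i => //; apply: E; apply: A2.
- move=> w g u Hw Hu; have [v [u' [_ _ [E1 [E2 E3]] E4 E5]]] := key _ _ _ Hw Hu.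
  split; first by rewrite E4.
  split; first exact: prefix_trans E2 E5.
  exact: leq_trans E3 (size_prefix E5).
- move=> w u0 u1 Hw Hu0 Hu1.
  have [v0 [u0' [Hv0 Hu0' [_ [_ F3]] _ F5]]] := key _ _ _ Hw Hu0.
  have [v1 [u1' [Hv1 Hu1' [_ [_ G3]] _ G5]]] := key _ _ _ Hw Hu1.
  rewrite (prefix_nth false F5 F3) (prefix_nth false G5 G3).
  move: (A4 _ _ _ Hw Hv0 Hv1) Hu0' Hu1'.
  case: (nth false v0.2 _); case: (nth false v1.2 _) => //= _ H0 H1.
    by rewrite eq_sym; apply: B4 _ _ _ (A2 _ Hw) H1 H0.
  exact: B4 _ _ _ (A2 _ Hw) H0 H1.
Qed.

Lemma fle_trans X Y Z : is_forest Y -> fle X Y -> fle Y Z -> fle X Z.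
Proof. by move=> HY [a Ha] [b Hb]; exists (fun w => b (a w)); apply: embeds_comp. Qed.

Fixpoint positions t : seq (seq bool) :=
  [::] :: (if t is Node l r then map (cons false) (positions l) ++ map (cons true) (positions r)
           else [::]).

Lemma mem_positions t q : (q \in positions t) = isSome (subt t q).
Proof.
elim: t q => [i|l IHl r IHr] [|b q] //=; rewrite inE //= mem_cat.
have cons_inj (c : bool) : injective (cons c) by move=> x y [].
case: b; rewrite (mem_map (cons_inj _)) ?(IHl, IHr).
  by apply/orP/idP => [[/mapP [x _]|]|->] //; right.
by apply/orP/idP => [[|/mapP [x _]]|->] //; left.
Qed.

Lemma positions_uniq t : uniq (positions t).
Proof.
elim: t => [i|l IHl r IHr] //=; have cons_inj (c : bool) : injective (cons c) by move=> x y [].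
rewrite mem_cat cat_uniq !map_inj_uniq ?IHl ?IHr //= andbT; apply/andP; split.
  by apply/norP; split; apply/negP => /mapP [x _].
by apply/hasPn => x /mapP [y _ ->]; apply/negP => /mapP [z _].
Qed.

Fixpoint height (t : btree I) : nat := if t is Node l r then (maxn (height l) (height r)).+1 else 0.

Lemma subt_size t q s : subt t q = Some s -> size q <= height t.
Proof.
elim: t q => [i|l IHl r IHr] [|b q] //= Hq; rewrite ltnS.
by case: b Hq => /= Hq;
  [apply: leq_trans (IHr _ Hq) (leq_maxr _ _)|apply: leq_trans (IHl _ Hq) (leq_maxl _ _)].
Qed.

Lemma ltn_sub_measure (h a b n : nat) : h - a < n.+1 -> a < b -> b <= h -> h - b < n.
Proof. lia. Qed.

Lemma subt_prefix t q z s : prefix q z -> subt t z = Some s -> exists s', subt t q = Some s'.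
Proof. by move=> /prefixP [r ->]; rewrite subt_cat; case: (subt t q) => // s'; exists s'. Qed.

Lemma subt_leaf_prefix t q z i s :
  subt t q = Some (Leaf i) -> prefix q z -> subt t z = Some s -> z = q.
Proof. by move=> Hq /prefixP [[|b r] ->]; rewrite ?cats0 // subt_cat Hq. Qed.

End Trees.

Section Ancestor.
Variables (A : Type) (E : A -> A -> Prop).

Inductive ancestor (p : A) : A -> Prop :=
| ancestor_edge z : E z p -> ancestor p z
| ancestor_step z q : E z q -> ancestor p q -> ancestor p z.

Lemma ancestor_trans p q z : ancestor p q -> ancestor q z -> ancestor p z.
Proof.
move=> Hpq; elim=> [z' Hz|z' q' Hz _ IH]; first exact: ancestor_step Hz Hpq.
exact: ancestor_step Hz IH.
Qed.

Lemma ancestor_last_edge p z :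
  ancestor p z -> exists2 q, E z q & q = p \/ ancestor p q.
Proof. by case=> [z' H|z' q H1 H2]; [exists p => //; left|exists q => //; right]. Qed.

Lemma ancestor_first_edge p z :
  ancestor p z -> exists2 c, E c p & c = z \/ ancestor c z.
Proof.
elim=> [z' Hz|z' q Hz _ [c Hc Hcq]]; first by exists z'; [|left].
exists c => //; right; case: Hcq => [->|Ha]; [exact: ancestor_edge Hz|exact: ancestor_step Hz Ha].
Qed.

Definition ancestor_eq p z := p = z \/ ancestor p z.

End Ancestor.

Lemma ancestor_lift (A : Type) (E E' : A -> A -> Prop) p z :
  (forall z p, E z p -> ancestor E' p z) -> ancestor E p z -> ancestor E' p z.
Proof. by move=> HE; elim=> [z' /HE //|z' q /HE Hq _ IH]; apply: ancestor_trans IH Hq. Qed.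

(** * Forests below T *)

Section BelowT.
Variables (I : finType) (T : btree I).
Hypothesis HT : is_forest [:: T].
Implicit Types (t : btree I) (X Y : forest I) (w v u : vtx) (p q z : seq bool).

Definition leaf_pos (i : I) := odflt [::] (find_leaf T i).

Lemma count_leaves_T i : count_mem i (leaves T) = 1.
Proof. by have := HT i; rewrite /= cats0. Qed.

Lemma subt_leaf_pos i : subt T (leaf_pos i) = Some (Leaf i).
Proof.
have : i \in leaves T by rewrite -has_pred1 has_count count_leaves_T.
by move/find_leaf_mem => [p Hp]; rewrite /leaf_pos Hp; apply: find_leaf_subt.
Qed.

Lemma leaf_pos_uniq q i : subt T q = Some (Leaf i) -> q = leaf_pos i.
Proof.
move=> Hq; apply/eqP; have /eqP := count_leaves_T i; apply: contraTT => Hne.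
by rewrite neq_ltn (subt_leaf_count2 Hne Hq (subt_leaf_pos i)) orbT.
Qed.

Lemma leaf_pos_inj : injective leaf_pos.
Proof. by move=> i j E; have := subt_leaf_pos i; rewrite E subt_leaf_pos => -[]. Qed.

Lemma subF_T q : subF [:: T] (0, q) = subt T q.
Proof. by []. Qed.

Lemma inner_T_index v : is_inner [:: T] v -> v = (0, v.2).
Proof. by case: v => [[|j] q] //; rewrite /is_inner /subF /= onth0n. Qed.

Lemma subF_T_leaf u i : subF [:: T] u = Some (Leaf i) -> u = (0, leaf_pos i).
Proof.
case: u => [[|j] q] Hu; first by rewrite -(leaf_pos_uniq Hu).
by move: Hu; rewrite /subF /= onth0n.
Qed.

Lemma innerT_leaf q i : innerT T q -> subt T q = Some (Leaf i) -> False.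
Proof. by rewrite /innerT /is_inner subF_T => + Hq; rewrite Hq. Qed.

Lemma strict_below_T z p : strict_below (0, z) (0, p) <-> proper_prefix p z.
Proof. by rewrite /strict_below /proper_prefix /=; split=> [[_ [-> ->]]|/andP [-> ->]]. Qed.

Definition img_pos X (chi : vtx -> vtx) w :=
  if is_inner X w then (chi w).2
  else if subF X w is Some (Leaf i) then leaf_pos i else [::].

Lemma img_pos_leaf X chi w i : subF X w = Some (Leaf i) -> img_pos X chi w = leaf_pos i.
Proof. by rewrite /img_pos /is_inner => ->. Qed.

Lemma img_pos_inner X chi w : is_inner X w -> img_pos X chi w = (chi w).2.
Proof. by rewrite /img_pos => ->. Qed.

Section Embedding.
Variables (X : forest I) (chi : vtx -> vtx).
Hypothesis HE : embeds X [:: T] chi.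

Lemma embedT_index w : is_inner X w -> chi w = (0, img_pos X chi w).
Proof. by move=> Hw; rewrite img_pos_inner // -inner_T_index //; apply: HE.1. Qed.

Lemma innerT_img_pos w : is_inner X w -> innerT T (img_pos X chi w).
Proof. by move=> Hw; rewrite /innerT -embedT_index //; apply: HE.1. Qed.

Lemma target_T v u : target X [:: T] chi v u -> u = (0, img_pos X chi v).
Proof.
case=> [[Hv ->]|[i [Hv Hu]]]; first exact: embedT_index.
by rewrite (img_pos_leaf _ Hv); apply: subF_T_leaf.
Qed.

Lemma target_T_img_pos v s : subF X v = Some s -> target X [:: T] chi v (0, img_pos X chi v).
Proof.
case: s => [i|l r] Hv; first by right; exists i; rewrite (img_pos_leaf _ Hv) subF_T subt_leaf_pos.
have Hi : is_inner X v by rewrite /is_inner Hv.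
by left; split=> //; rewrite -embedT_index.
Qed.

Lemma embedT_inj w w' : is_inner X w -> is_inner X w' ->
  img_pos X chi w = img_pos X chi w' -> w = w'.
Proof.
move=> Hw Hw' E; have [_ [D2i _]] := HE; apply: D2i => //.
by rewrite embedT_index // embedT_index // E.
Qed.

Lemma img_pos_inj w w' s s' : is_forest X ->
  subF X w = Some s -> subF X w' = Some s' -> img_pos X chi w = img_pos X chi w' -> w = w'.
Proof.
move=> HX; case: s => [i|l r] Hw; case: s' => [i'|l' r'] Hw'.
- rewrite (img_pos_leaf _ Hw) (img_pos_leaf _ Hw') => /leaf_pos_inj E.
  by rewrite E in Hw; apply: forest_leaf_uniq HX Hw Hw'.
- have Hi : is_inner X w' by rewrite /is_inner Hw'.
  move=> E; have := innerT_img_pos Hi; rewrite -E (img_pos_leaf _ Hw) => /innerT_leaf.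
  by move/(_ _ (subt_leaf_pos i)).
- have Hi : is_inner X w by rewrite /is_inner Hw.
  move=> E; have := innerT_img_pos Hi; rewrite E (img_pos_leaf _ Hw') => /innerT_leaf.
  by move/(_ _ (subt_leaf_pos i')).
- by apply: embedT_inj; rewrite /is_inner ?Hw ?Hw'.
Qed.

Lemma img_pos_child w g : is_inner X w ->
  proper_prefix (img_pos X chi w) (img_pos X chi (child w g)).
Proof.
move=> Hw; have [s Hs] := inner_child_subF g Hw; have [_ [_ [D1 _]]] := HE.
by move: (D1 _ _ _ Hw (target_T_img_pos Hs)); rewrite embedT_index // => /strict_below_T.
Qed.

Definition img_side w g := nth false (img_pos X chi (child w g)) (size (img_pos X chi w)).

Lemma img_side_neq w : is_inner X w -> img_side w false != img_side w true.
Proof.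
move=> Hw; have [s0 Hs0] := inner_child_subF false Hw; have [s1 Hs1] := inner_child_subF true Hw.
have [_ [_ [_ D4]]] := HE.
have := D4 _ _ _ Hw (target_T_img_pos Hs0) (target_T_img_pos Hs1).
by rewrite /img_side (img_pos_inner _ Hw).
Qed.

Lemma img_pos_child_side w g : is_inner X w ->
  prefix (rcons (img_pos X chi w) (img_side w g)) (img_pos X chi (child w g)).
Proof. by move=> Hw; apply/(rcons_prefixP false); split; [apply: img_pos_child|]. Qed.

Lemma img_pos_subtree y g r s : is_inner X y -> subF X (y.1, y.2 ++ g :: r) = Some s ->
  prefix (rcons (img_pos X chi y) (img_side y g)) (img_pos X chi (y.1, y.2 ++ g :: r)).
Proof.
move=> Hy Hs; have [u' [Hu' [_ Hp]]] := target_subtree HE Hy (target_T_img_pos Hs).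
rewrite (target_T Hu') in Hp; apply: prefix_trans Hp; exact: img_pos_child_side.
Qed.

End Embedding.

Definition inner_img X chi q := exists w, is_inner X w /\ img_pos X chi w = q.
Definition edge_img X chi z p := exists w g,
  [/\ is_inner X w, img_pos X chi (child w g) = z & img_pos X chi w = p].

Definition is_node (S : seq bool -> Prop) q := S q \/ exists i, subt T q = Some (Leaf i).

(* A forest below T, described through its embedding into T: [S] is the set of positions of
   its inner vertices and [E z p] says that the vertex at [z] is a child of the one at [p]. *)
Record config (S : seq bool -> Prop) (E : seq bool -> seq bool -> Prop) : Prop := Config {
  config_innerT p : S p -> innerT T p;
  config_parent z p : E z p -> S p;
  config_below z p : E z p -> proper_prefix p z;
  config_node z p : E z p -> is_node S z;
  config_parent_uniq z p p' : E z p -> E z p' -> p = p';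
  config_child_ex p b : S p -> exists2 z, E z p & prefix (rcons p b) z;
  config_child_uniq z z' p b : E z p -> E z' p ->
    prefix (rcons p b) z -> prefix (rcons p b) z' -> z = z' }.

Lemma config_of_embedding X chi : is_forest X -> embeds X [:: T] chi ->
  config (inner_img X chi) (edge_img X chi).
Proof.
move=> HX HE; split.
- by move=> p [w [Hw <-]]; apply: innerT_img_pos.
- by move=> z p [w [g [Hw _ <-]]]; exists w.
- by move=> z p [w [g [Hw <- <-]]]; apply: img_pos_child.
- move=> z p [w [g [Hw <- _]]]; have [[i|l r] Hs] := inner_child_subF g Hw.
    by right; exists i; rewrite (img_pos_leaf _ Hs) subt_leaf_pos.
  by left; exists (child w g); rewrite /is_inner Hs.
- move=> z p p' [w [g [Hw Ez Ep]]] [w' [g' [Hw' Ez' Ep']]].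
  have [s Hs] := inner_child_subF g Hw; have [s' Hs'] := inner_child_subF g' Hw'.
  have /child_inj [E _] := img_pos_inj HE HX Hs Hs' (etrans Ez (esym Ez')).
  by rewrite -Ep -Ep' E.
- move=> p b [w [Hw <-]]; have Hd := img_side_neq HE Hw.
  have [g Hg] : exists g, img_side X chi w g = b.
    case: (boolP (img_side X chi w false == b)) => [/eqP|Hb]; first by exists false.
    by exists true; move: Hd Hb; case: b; case: (img_side _ _ _ false); case: (img_side _ _ _ true).
  by exists (img_pos X chi (child w g)); [exists w, g|rewrite -Hg; apply: img_pos_child_side].
- move=> z z' p b [w [g [Hw Ez Ep]]] [w' [g' [Hw' Ez' Ep']]] Hz Hz'.
  have Eww : w = w' by apply: (embedT_inj HE Hw Hw'); rewrite Ep Ep'.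
  subst w'; case: (eqVneq g g') => [Eg|Hg]; first by rewrite -Ez -Ez' Eg.
  have := img_side_neq HE Hw; move: Hz Hz'; rewrite -Ez -Ez' -Ep.
  move=> /(rcons_prefixP false) [_ H1] /(rcons_prefixP false) [_ H2].
  have Es : img_side X chi w g = img_side X chi w g' by rewrite /img_side H1 H2.
  by move: Hg Es; case: (g); case: (g') => // _ ->; rewrite eqxx.
Qed.

(* the image of an inner vertex is the fork point of the images of leaves of its two subtrees *)
Lemma embedT_uniq X chi chi' w : embeds X [:: T] chi -> embeds X [:: T] chi' ->
  is_inner X w -> chi w = chi' w.
Proof.
move=> HE HE' Hw.
have leaf_below g : exists r i, subF X (w.1, w.2 ++ g :: r) = Some (Leaf i).
  have [s Hs] := inner_child_subF g Hw; have [r [i Hi]] := subF_reaches_leaf Hs.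
  by exists r, i; rewrite -cat_rcons.
have [r0 [i0 H0]] := leaf_below false; have [r1 [i1 H1]] := leaf_below true.
rewrite (embedT_index HE Hw) (embedT_index HE' Hw); congr pair.
have := img_pos_subtree HE Hw H0; have := img_pos_subtree HE Hw H1.
have := img_pos_subtree HE' Hw H0; have := img_pos_subtree HE' Hw H1.
rewrite !(img_pos_leaf _ H0) !(img_pos_leaf _ H1) => B1 B0 A1 A0.
exact: fork_uniq A0 A1 (img_side_neq HE Hw) B0 B1 (img_side_neq HE' Hw).
Qed.

Lemma inV_inner_img X chi q : embeds X [:: T] chi -> inV T X q <-> inner_img X chi q.
Proof.
move=> HE; split=> [[psi [Hpsi [w [Hw Hpw]]]]|[w [Hw <-]]].
  by exists w; split=> //; rewrite (img_pos_inner _ Hw) (embedT_uniq HE Hpsi Hw) Hpw.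
by exists chi; split=> //; exists w; split=> //; rewrite -embedT_index.
Qed.

Lemma edge_img_subtree Y chi y g r s : embeds Y [:: T] chi -> is_inner Y y ->
  subF Y (y.1, y.2 ++ g :: r) = Some s ->
  ancestor (edge_img Y chi) (img_pos Y chi y) (img_pos Y chi (y.1, y.2 ++ g :: r)).
Proof.
move=> HE Hy; elim/last_ind: r s => [|r d IH] s.
  by rewrite cats1 => _; apply: ancestor_edge; exists y, g.
rewrite -rcons_cons -rcons_cat => Hs.
have Hv : is_inner Y (y.1, y.2 ++ g :: r) := @is_inner_parent _ Y (y.1, y.2 ++ g :: r) d s Hs.
have [sv Hsv] := inner_subF Hv.
by apply: ancestor_step (IH _ Hsv); exists (y.1, y.2 ++ g :: r), d.
Qed.

Lemma edge_img_ancestor_below Y chi y u s : is_forest Y -> embeds Y [:: T] chi ->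
  is_inner Y y -> subF Y u = Some s ->
  ancestor (edge_img Y chi) (img_pos Y chi y) (img_pos Y chi u) -> strict_below u y.
Proof.
move=> HY HE Hy Hu; move Ep: (img_pos Y chi y) => p; move Ez: (img_pos Y chi u) => z Ha.
elim: Ha y u s Hy Hu Ep Ez => [z' [w [g [Hw Ez Ep]]]|z' q [w [g [Hw Ez Eq]]] _ IH]
  y u s Hy Hu Hyp Huz.
- have Ewy : w = y by apply: (embedT_inj HE Hw Hy); rewrite Ep Hyp.
  subst w; have [s' Hs'] := inner_child_subF g Hy.
  by rewrite (img_pos_inj HE HY Hu Hs' (etrans Huz (esym Ez))); apply: strict_below_child.
- have [sw Hsw] := inner_subF Hw; have Hwy := IH y w sw Hy Hsw Hyp Eq.
  have [s' Hs'] := inner_child_subF g Hw.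
  rewrite (img_pos_inj HE HY Hu Hs' (etrans Huz (esym Ez))).
  exact: strict_below_trans (strict_below_child w g) Hwy.
Qed.

Lemma fle_config X Y a chiX chiY : is_forest Y -> embeds X Y a ->
  embeds X [:: T] chiX -> embeds Y [:: T] chiY ->
  (forall q, inner_img X chiX q -> inner_img Y chiY q) /\
  (forall z p, edge_img X chiX z p -> ancestor (edge_img Y chiY) p z).
Proof.
move=> HY Ha HEX HEY; have HC := embeds_comp HY Ha HEY; have [A2 [_ [A1 _]]] := Ha.
have Ea w : is_inner X w -> img_pos X chiX w = img_pos Y chiY (a w).
  by move=> Hw; rewrite (img_pos_inner _ Hw) (img_pos_inner _ (A2 _ Hw)) (embedT_uniq HEX HC Hw).
split; first by move=> q [w [Hw <-]]; exists (a w); split; [apply: A2|rewrite Ea].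
move=> z p [w [g [Hw <- <-]]].
have [v [sv [Hv1 Hv2 Hv3]]] : exists v sv, [/\ target X Y a (child w g) v,
    subF Y v = Some sv & img_pos Y chiY v = img_pos X chiX (child w g)].
  have [[i|l r] Hs] := inner_child_subF g Hw.
    have [v Hv] := forest_leaf_ex i HY; exists v, (Leaf i); split=> //; first by right; exists i.
    by rewrite (img_pos_leaf _ Hv) (img_pos_leaf _ Hs).
  have Hc : is_inner X (child w g) by rewrite /is_inner Hs.
  have [sv Hsv] := inner_subF (A2 _ Hc).
  by exists (a (child w g)), sv; split=> //; [left|rewrite Ea].
have Hsb := A1 _ _ _ Hw Hv1; rewrite (strict_below_split Hsb) in Hv2.
by have := edge_img_subtree HEY (A2 _ Hw) Hv2; rewrite -(strict_below_split Hsb) Hv3 -Ea.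
Qed.

Lemma config_fle X Y chiX chiY : is_forest X -> is_forest Y ->
  embeds X [:: T] chiX -> embeds Y [:: T] chiY ->
  (forall q, inner_img X chiX q -> inner_img Y chiY q) ->
  (forall z p, edge_img X chiX z p -> ancestor (edge_img Y chiY) p z) ->
  fle X Y.
Proof.
move=> HX HY HEX HEY HS HE.
have Hpsi w : exists y, is_inner X w -> is_inner Y y /\ img_pos Y chiY y = img_pos X chiX w.
  case: (boolP (is_inner X w)) => Hw; last by exists w.
  by have [y [Hy E]] := HS _ (ex_intro _ w (conj Hw erefl)); exists y.
pose psi w := proj1_sig (constructive_indefinite_description _ (Hpsi w)).
have Hp w : is_inner X w -> is_inner Y (psi w) /\ img_pos Y chiY (psi w) = img_pos X chiX w.
  exact: (proj2_sig (constructive_indefinite_description _ (Hpsi w))).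
have target_img w g u : is_inner X w -> target X Y psi (child w g) u ->
    exists2 su, subF Y u = Some su & img_pos Y chiY u = img_pos X chiX (child w g).
  move=> Hw [[Hc ->]|[i [Hc Hu]]]; last first.
    by exists (Leaf i); rewrite // (img_pos_leaf _ Hu) (img_pos_leaf _ Hc).
  by have [Hi E] := Hp _ Hc; have [su Hsu] := inner_subF Hi; exists su.
have D1 w g u : is_inner X w -> target X Y psi (child w g) u -> strict_below u (psi w).
  move=> Hw Hu; have [su Hsu Eu] := target_img _ _ _ Hw Hu; have [Hi Ei] := Hp _ Hw.
  have Hwg : edge_img X chiX (img_pos X chiX (child w g)) (img_pos X chiX w) by exists w, g.
  by apply: edge_img_ancestor_below HY HEY Hi Hsu _; rewrite Ei Eu; apply: (HE _ _ Hwg).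
exists psi; split; [|split; [|split]].
- by move=> w /Hp [].
- move=> w w' Hw Hw' E; have [_ E1] := Hp _ Hw; have [_ E2] := Hp _ Hw'.
  have [sw Hsw] := inner_subF Hw; have [sw' Hsw'] := inner_subF Hw'.
  by apply: (img_pos_inj HEX HX Hsw Hsw'); rewrite -E1 -E2 E.
- exact: D1.
- move=> w u0 u1 Hw Hu0 Hu1; have [Hi Ei] := Hp _ Hw.
  have side_of g u : target X Y psi (child w g) u ->
      img_side Y chiY (psi w) (nth false u.2 (size (psi w).2)) = img_side X chiX w g.
    move=> Hu; have Su := D1 _ _ _ Hw Hu; have [su Hsu Eu] := target_img _ _ _ Hw Hu.
    rewrite (strict_below_split Su) in Hsu.
    have := img_pos_subtree HEY Hi Hsu; rewrite -(strict_below_split Su) Eu Ei.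
    by move/(rcons_prefixP false) => [_ <-].
  have := img_side_neq HEX Hw; rewrite -(side_of _ _ Hu0) -(side_of _ _ Hu1).
  by apply: contra => /eqP ->.
Qed.

Section Config.
Variables (S : seq bool -> Prop) (E : seq bool -> seq bool -> Prop).
Hypothesis HC : config S E.

Lemma node_subt q : is_node S q -> exists s, subt T q = Some s.
Proof.
case=> [/(config_innerT HC)|[i Hi]]; last by exists (Leaf i).
by rewrite /innerT /is_inner subF_T; case: (subt T q) => // s _; exists s.
Qed.

Lemma ancestor_proper_prefix p z : ancestor E p z -> proper_prefix p z.
Proof.
elim=> [z' /(config_below HC) //|z' q /(config_below HC) Hqz _ IH].
exact: proper_prefix_trans IH Hqz.
Qed.

Lemma ancestor_top p z : ancestor E p z -> S p.
Proof. by elim=> [z' /(config_parent HC)|]. Qed.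

Lemma ancestor_chain b x : ancestor E b x ->
  forall a, ancestor E a x -> size b < size a -> ancestor E b a.
Proof.
elim=> [x' Hb|x' q Hq Hbq IH] a Ha Hs.
- have [q Hq [Eqa|Hqa]] := ancestor_last_edge Ha.
    by subst q; rewrite (config_parent_uniq HC Hq Hb) ltnn in Hs.
  rewrite (config_parent_uniq HC Hq Hb) in Hqa; have /andP [_ Hs'] := ancestor_proper_prefix Hqa.
  by move: (ltn_trans Hs Hs'); rewrite ltnn.
- have [q' Hq' H] := ancestor_last_edge Ha; rewrite (config_parent_uniq HC Hq' Hq) in H.
  by case: H => [<-|Hqa]; [exact: Hbq | exact: IH _ Hqa Hs].
Qed.

Lemma ancestor_side p x b z : ancestor E p x -> prefix (rcons p b) x ->
  E z p -> prefix (rcons p b) z -> z = x \/ ancestor E z x.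
Proof.
elim=> [x' Hx|x' q Hq Hanc IH] Hx' Hz Hzp.
  by left; exact: (config_child_uniq HC Hz Hx Hzp Hx').
have Hqp : prefix (rcons p b) q.
  apply/(rcons_prefixP false); split; first exact: ancestor_proper_prefix Hanc.
  move/(rcons_prefixP false): Hx' => [_ <-].
  have /andP [Hqx _] := config_below HC Hq; have /andP [_ Hpq] := ancestor_proper_prefix Hanc.
  exact: esym (prefix_nth _ Hqx Hpq).
by case: (IH Hqp Hz Hzp) => [->|H]; right; [exact: ancestor_edge Hq|exact: ancestor_step Hq H].
Qed.

Definition full s := forall q, innerT T q -> prefix s q -> S q.

Lemma full_parent s : S s -> full s ->
  forall z, is_node S z -> proper_prefix s z -> exists2 q, E z q & prefix s q.
Proof.
suff: forall n s, height T - size s < n -> S s -> full s ->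
    forall z, is_node S z -> proper_prefix s z -> exists2 q, E z q & prefix s q.
  by move=> H; apply: (H (height T - size s).+1).
elim=> [//|n IH] {}s Hn Ss Fs z Nz Hsz.
pose b := nth false z (size s); pose t := rcons s b.
have Htz : prefix t z by apply/(rcons_prefixP false).
have [zb Hzb Hzbp] := config_child_ex HC b Ss.
have [sz Hsz'] := node_subt Nz; have [st Hst] := subt_prefix Htz Hsz'.
have [szb Hszb] := node_subt (config_node HC Hzb).
case: st Hst => [i|l r] Hst.
  have Ez := subt_leaf_prefix Hst Htz Hsz'; have Ezb := subt_leaf_prefix Hst Hzbp Hszb.
  by exists s; [rewrite Ez -Ezb|apply: prefix_refl].
have St : S t by apply: Fs (prefix_rcons s b); rewrite /innerT /is_inner subF_T Hst.
have Ft : full t by move=> q Hq Htq; apply: Fs Hq (prefix_trans (prefix_rcons s b) Htq).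
have Hn' : height T - size t < n by have := subt_size Hst; rewrite size_rcons; lia.
case: (eqVneq z t) => [Ezt|Hzt].
  case: (eqVneq zb t) => [Ezb|Hzb']; first by exists s; [rewrite Ezt -Ezb|apply: prefix_refl].
  have Hzb'' := prefix_neq_proper Hzbp (elimN eqP Hzb').
  have [q Hq Htq] := IH t Hn' St Ft zb (config_node HC Hzb) Hzb''.
  rewrite (config_parent_uniq HC Hq Hzb) in Htq.
  by have := size_prefix Htq; rewrite size_rcons ltnn.
have [q Hq Htq] := IH t Hn' St Ft z Nz (prefix_neq_proper Htz (elimN eqP Hzt)).
by exists q => //; apply: prefix_trans (prefix_rcons s b) Htq.
Qed.

End Config.

(* by induction from the leaves: the [E1]-child [w] of [p] on the side of [z] lies below [z],
   so the [E2]-parent of [w] would be a second [E1]-parent *)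
Lemma config_edges_rigid S1 E1 S2 E2 : config S1 E1 -> config S2 E2 ->
  (forall q, S1 q <-> S2 q) -> (forall z p, E1 z p -> ancestor E2 p z) ->
  forall z p, E2 z p -> E1 z p.
Proof.
move=> H1 H2 HS HE.
suff: forall n z, height T - size z < n -> forall p, E2 z p -> E1 z p.
  by move=> H z p; apply: H (height T - size z).+1 z (ltnSn _) p.
elim=> [//|n IH] z Hn p Hzp; apply: NNPP => Hn1.
have Sp := config_parent H2 Hzp; have Hzsb := config_below H2 Hzp.
pose b := nth false z (size p).
have Hpbz : prefix (rcons p b) z by apply/(rcons_prefixP false).
have [w Hw Hwp] := config_child_ex H1 b (proj2 (HS p) Sp).
case: (ancestor_side H2 (HE _ _ Hw) Hwp Hzp Hpbz) => [Ezw|Hzw]; first by apply: Hn1; rewrite Ezw.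
have [q Hwq Hq] := ancestor_last_edge Hzw.
have Hwq1 : E1 w q.
  apply: (IH w _ q Hwq); have [sw Hsw] := node_subt H2 (config_node H2 Hwq).
  have /andP [_ Hwsz] := ancestor_proper_prefix H2 Hzw.
  exact: ltn_sub_measure Hn Hwsz (subt_size Hsw).
rewrite -(config_parent_uniq H1 Hw Hwq1) in Hq.
have /andP [_ Hs1] := Hzsb; case: Hq => [Ez|Ha]; first by subst z; rewrite ltnn in Hs1.
by have /andP [_ Hs2] := ancestor_proper_prefix H2 Ha; move: (ltn_trans Hs1 Hs2); rewrite ltnn.
Qed.

(** * Realizing configurations *)

Section Realization.
Variables (S : seq bool -> Prop) (E : seq bool -> seq bool -> Prop).
Hypothesis HC : config S E.

Definition child_at p b := epsilon (inhabits [::]) (fun z => E z p /\ prefix (rcons p b) z).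

Lemma child_atP p b : S p -> E (child_at p b) p /\ prefix (rcons p b) (child_at p b).
Proof.
move=> Sp; have [z Hz Hzp] := config_child_ex HC b Sp.
exact: (epsilon_spec (inhabits [::]) (fun z => E z p /\ prefix (rcons p b) z)
  (ex_intro _ z (conj Hz Hzp))).
Qed.

Lemma child_at_nth p z : E z p -> z = child_at p (nth false z (size p)).
Proof.
move=> Hz; have Hzp : prefix (rcons p (nth false z (size p))) z.
  by apply/(rcons_prefixP false); rewrite (config_below HC Hz).
have [Hc Hcp] := child_atP (nth false z (size p)) (config_parent HC Hz).
exact: (config_child_uniq HC Hz Hc Hzp Hcp).
Qed.

Lemma ancestor_eq_prefix p z : ancestor_eq E p z -> prefix p z.
Proof. by case=> [->|/(ancestor_proper_prefix HC) /andP []]; [apply: prefix_refl|]. Qed.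

Lemma ancestor_eq_child p b z : S p -> ancestor_eq E (child_at p b) z -> ancestor E p z.
Proof.
move=> Sp Hz; have [Hc _] := child_atP b Sp.
by case: Hz => [<-|Ha]; [apply: ancestor_edge Hc|apply: ancestor_trans (ancestor_edge Hc) Ha].
Qed.

(* [realizes z t]: [t] is the tree hanging from the vertex at [z] *)
Inductive realizes : seq bool -> btree I -> Prop :=
| realizes_leaf z i : ~ S z -> subt T z = Some (Leaf i) -> realizes z (Leaf i)
| realizes_node z l r : S z -> realizes (child_at z false) l -> realizes (child_at z true) r ->
    realizes z (Node l r).

Lemma realizes_S_node z t : realizes z t -> S z -> exists l r, t = Node l r.
Proof. by case=> [z' i H _ /H|z' l r _ _ _ _] //; exists l, r. Qed.

Lemma realizes_node_S z l r : realizes z (Node l r) -> S z.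
Proof. by case E: _ / => //. Qed.

Lemma realizes_leaf_inv z i : realizes z (Leaf i) -> ~ S z /\ subt T z = Some (Leaf i).
Proof. by case E: _ / => // [z' i' H1 H2] [<-]. Qed.

Fixpoint first_leaf (t : btree I) : I :=
  match t with Leaf i => i | Node l _ => first_leaf l end.

(* [n] is fuel: [height T] bounds the depth of any realized tree *)
Fixpoint build (n : nat) z : btree I :=
  if n is n'.+1 then
    if holds (S z) then Node (build n' (child_at z false)) (build n' (child_at z true))
    else if subt T z is Some (Leaf i) then Leaf i else Leaf (first_leaf T)
  else Leaf (first_leaf T).

Lemma build_realizes n z : is_node S z -> height T - size z < n -> realizes z (build n z).
Proof.
elim: n z => [//|n IH] z Nz Hn /=; case: holdsP => Sz; last first.
  by case: Nz => [//|[i Hi]]; rewrite Hi; apply: realizes_leaf.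
have Hb b : realizes (child_at z b) (build n (child_at z b)).
  have [Hc _] := child_atP b Sz; have Nc := config_node HC Hc.
  apply: (IH _ Nc); have [s Hs] := node_subt HC Nc; have /andP [_ Hzc] := config_below HC Hc.
  exact: ltn_sub_measure Hn Hzc (subt_size Hs).
exact: realizes_node.
Qed.

Definition walk z p := foldl child_at z p.

Lemma walk_rcons z p b : walk z (rcons p b) = child_at (walk z p) b.
Proof. by rewrite /walk foldl_rcons. Qed.

Lemma realizes_subt z t p s : realizes z t -> subt t p = Some s -> realizes (walk z p) s.
Proof.
elim: p z t => [|b p IH] z t Hzt /=; first by rewrite subt_nil => -[<-].
by case: Hzt => [z' i _ _ //|z' l r _ Hl Hr]; case: b => /= H; [apply: IH Hr H|apply: IH Hl H].
Qed.

Lemma walk_ancestor z t p s : realizes z t -> subt t p = Some s -> ancestor_eq E z (walk z p).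
Proof.
elim: p z t => [|b p IH] z t Hzt /=; first by left.
case: Hzt => [z' i _ _ //|z' l r Sz Hl Hr] H; right; apply: (ancestor_eq_child (b := b) Sz).
by case: b H => /= H; [apply: IH Hr H|apply: IH Hl H].
Qed.

Lemma walk_side z t b p s : realizes z t -> subt t (b :: p) = Some s ->
  prefix (rcons z b) (walk z (b :: p)).
Proof.
case=> [z' i _ _ //|z' l r Sz Hl Hr] H; have [_ Hp] := child_atP b Sz.
apply: (prefix_trans Hp); apply: ancestor_eq_prefix.
by case: b {Hp} H => /= H; [apply: walk_ancestor Hr H|apply: walk_ancestor Hl H].
Qed.

Lemma walk_inj z t p p' s s' : realizes z t -> subt t p = Some s -> subt t p' = Some s' ->
  walk z p = walk z p' -> p = p'.
Proof.
elim: p z t p' s s' => [|b p IH] z t [|b' p'] s s' Hzt H H' //.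
- by move=> Ew; have := size_prefix (walk_side Hzt H'); rewrite -Ew /= size_rcons ltnn.
- by move=> Ew; have := size_prefix (walk_side Hzt H); rewrite Ew /= size_rcons ltnn.
move=> Ew; have := walk_side Hzt H; rewrite Ew => /prefix_rcons_inj/(_ (walk_side Hzt H')) Eb.
subst b'; case: Hzt H H' Ew => [z0 i _ _ //|z0 l r _ Hl Hr].
by case: b => /= H H' Ew; [rewrite (IH _ _ _ _ _ Hr H H' Ew)|rewrite (IH _ _ _ _ _ Hl H H' Ew)].
Qed.

Definition is_root z := is_node S z /\ ~ exists p, E z p.

Definition roots := filter (fun z => holds (is_root z)) (positions T).

Lemma roots_uniq : uniq roots.
Proof. exact: filter_uniq (positions_uniq T). Qed.

Lemma mem_roots z : z \in roots <-> is_root z.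
Proof.
rewrite mem_filter; split=> [/andP [/holdsP //]|Hz]; rewrite (introT (holdsP _) Hz).
by have [s Hs] := node_subt HC Hz.1; rewrite mem_positions Hs.
Qed.

Lemma root_realizes z : is_root z -> realizes z (build (height T).+1 z).
Proof. by move=> [Nz _]; apply: build_realizes Nz _; rewrite ltnS leq_subr. Qed.

Lemma ancestor_eq_total p q z : ancestor_eq E p z -> ancestor_eq E q z ->
  ancestor_eq E p q \/ ancestor_eq E q p.
Proof.
case=> [->|Hp]; first by right.
case=> [Eq|Hq]; first by left; rewrite Eq; right.
case: (ltngtP (size p) (size q)) => Hs.
- by left; right; apply: (ancestor_chain HC Hp Hq Hs).
- by right; right; apply: (ancestor_chain HC Hq Hp Hs).
- left; left; apply: (@prefix_size_inj _ p q z _ _ Hs).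
  + by case/andP: (ancestor_proper_prefix HC Hp).
  + by case/andP: (ancestor_proper_prefix HC Hq).
Qed.

Lemma root_uniq r r' z : is_root r -> is_root r' ->
  ancestor_eq E r z -> ancestor_eq E r' z -> r = r'.
Proof.
move=> [_ Hr] [_ Hr'] Hrz Hr'z; case: (ancestor_eq_total Hrz Hr'z) => [[//|Ha]|[//|Ha]].
  by have [q Hq _] := ancestor_last_edge Ha; case: Hr'; exists q.
by have [q Hq _] := ancestor_last_edge Ha; case: Hr; exists q.
Qed.

Lemma root_exists z : is_node S z -> exists2 r, is_root r & ancestor_eq E r z.
Proof.
elim: {z}(size z).+1 {-2}z (ltnSn (size z)) => [//|n IH] z Hn Nz.
case: (classic (exists p, E z p)) => [[p Hp]|Hno]; last by exists z; [|left].
have /andP [_ Hpz] := config_below HC Hp.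
have [r Hr Hrp] := IH p (leq_trans Hpz Hn) (or_introl (config_parent HC Hp)).
exists r => //; right; case: Hrp => [->|Ha]; [apply: ancestor_edge Hp|apply: ancestor_step Hp Ha].
Qed.

Definition realization := map (build (height T).+1) roots.

Definition realization_pos (w : vtx) := walk (nth [::] roots w.1) w.2.

Lemma realization_subF w s : subF realization w = Some s ->
  exists2 r, onth roots w.1 = Some r &
    [/\ is_root r, subt (build (height T).+1 r) w.2 = Some s & realizes (realization_pos w) s].
Proof.
rewrite /subF /realization onth_map; case Er: (onth roots w.1) => [r|] // H.
have Hr : is_root r by apply/mem_roots/onthP; exists w.1.
exists r => //; split=> //; rewrite /realization_pos (onth_nth [::] _ _ _ Er).
exact: realizes_subt (root_realizes Hr) H.
Qed.

Lemma realization_pos_child w b :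
  realization_pos (child w b) = child_at (realization_pos w) b.
Proof. exact: walk_rcons. Qed.

Lemma realization_pos_inj w w' s s' : subF realization w = Some s ->
  subF realization w' = Some s' -> realization_pos w = realization_pos w' -> w = w'.
Proof.
move=> Hw Hw'; have [r Er [Hr Hs _]] := realization_subF Hw.
have [r' Er' [Hr' Hs' _]] := realization_subF Hw'.
rewrite /realization_pos (onth_nth [::] _ _ _ Er) (onth_nth [::] _ _ _ Er') => Ew.
have Err : r = r'.
  apply: (root_uniq Hr Hr' (walk_ancestor (root_realizes Hr) Hs)); rewrite Ew.
  exact: walk_ancestor (root_realizes Hr') Hs'.
subst r'; have Ej : w.1 = w'.1.
  apply: (onth_inj _ _ _ roots_uniq); last by rewrite Er Er'.
  by rewrite gtn_min -onthTE Er'.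
have Ep := walk_inj (root_realizes Hr) Hs Hs' Ew.
by case: w w' Ej Ep {Hw Hw' Er Hs Er' Hs' Ew} => [j p] [j' p'] /= -> ->.
Qed.

Definition realization_embedding (w : vtx) : vtx := (0, realization_pos w).

Lemma realization_inner w : is_inner realization w -> S (realization_pos w).
Proof.
by move=> /is_innerP [l [r Hw]]; have [_ _ [_ _ /realizes_node_S]] := realization_subF Hw.
Qed.

Lemma realization_img_pos w s : subF realization w = Some s ->
  img_pos realization realization_embedding w = realization_pos w.
Proof.
case: s => [i|l r] Hw; last by rewrite img_pos_inner // /is_inner Hw.
rewrite (img_pos_leaf _ Hw); have [_ _ [_ _ /realizes_leaf_inv [_ Hi]]] := realization_subF Hw.
by rewrite -(leaf_pos_uniq Hi).
Qed.

Lemma realization_target w u :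
  target realization [:: T] realization_embedding w u -> u = realization_embedding w.
Proof.
case=> [[_ ->]//|[i [Hw Hu]]]; rewrite (subF_T_leaf Hu).
by rewrite /realization_embedding -(realization_img_pos Hw) (img_pos_leaf _ Hw).
Qed.

Lemma realization_embeds : embeds realization [:: T] realization_embedding.
Proof.
split; [|split; [|split]].
- by move=> w /realization_inner /(config_innerT HC).
- move=> w w' Hw Hw' [Ew]; have [s Hs] := inner_subF Hw; have [s' Hs'] := inner_subF Hw'.
  exact: realization_pos_inj Hs Hs' Ew.
- move=> w b u Hw /realization_target ->; apply/strict_below_T.
  rewrite realization_pos_child; have [Hc _] := child_atP b (realization_inner Hw).
  exact: (config_below HC Hc).
- move=> w u0 u1 Hw /realization_target -> /realization_target ->.
  rewrite /realization_embedding /= !realization_pos_child.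
  have [_ /(rcons_prefixP false) [_ ->]] := child_atP false (realization_inner Hw).
  by have [_ /(rcons_prefixP false) [_ ->]] := child_atP true (realization_inner Hw).
Qed.

Lemma realizes_walk_ex r t q : realizes r t -> ancestor_eq E r q ->
  exists p s, subt t p = Some s /\ walk r p = q.
Proof.
move=> Hrt [<-|Ha]; first by exists [::], t; rewrite subt_nil.
elim: Ha => [z Hz|z q' Hz _ [p [s [Hs Hw]]]].
- have [l [r' Et]] := realizes_S_node Hrt (config_parent HC Hz); subst t.
  exists [:: nth false z (size r)], (if nth false z (size r) then r' else l).
  by rewrite /walk /= -child_at_nth //; case: (nth _ _ _); rewrite subt_nil.
- have Hqs : realizes q' s by rewrite -Hw; apply: realizes_subt Hrt Hs.
  have [l [r' Es]] := realizes_S_node Hqs (config_parent HC Hz); subst s.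
  exists (rcons p (nth false z (size q'))), (if nth false z (size q') then r' else l).
  by rewrite subt_rcons Hs walk_rcons Hw -child_at_nth.
Qed.

Lemma realization_inner_img q : inner_img realization realization_embedding q <-> S q.
Proof.
split=> [[w [Hw <-]]|Sq].
  by have [s Hs] := inner_subF Hw; rewrite (realization_img_pos Hs); apply: realization_inner.
have [r Hr Hrq] := root_exists (or_introl Sq).
have [p [s [Hs Hw]]] := realizes_walk_ex (root_realizes Hr) Hrq.
have [j Hj] : exists j, onth roots j = Some r by apply/onthP/mem_roots.
have Hjp : subF realization (j, p) = Some s by rewrite /subF /realization onth_map Hj.
have Hqs : realizes q s by rewrite -Hw; apply: realizes_subt (root_realizes Hr) Hs.
have [l [r' Es]] := realizes_S_node Hqs Sq; subst s.
exists (j, p); split; first by rewrite /is_inner Hjp.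
by rewrite (realization_img_pos Hjp) /realization_pos /= (onth_nth [::] _ _ _ Hj).
Qed.

Lemma realization_edge_img z p : edge_img realization realization_embedding z p <-> E z p.
Proof.
split=> [[w [g [Hw <- <-]]]|Hz].
  have [s Hs] := inner_subF Hw; have [sc Hsc] := inner_child_subF g Hw.
  rewrite (realization_img_pos Hs) (realization_img_pos Hsc) realization_pos_child.
  by have [] := child_atP g (realization_inner Hw).
have [w [Hw Ew]] := proj2 (realization_inner_img p) (config_parent HC Hz).
exists w, (nth false z (size p)); split=> //.
have [s Hs] := inner_subF Hw; have [sc Hsc] := inner_child_subF (nth false z (size p)) Hw.
rewrite (realization_img_pos Hsc) realization_pos_child -(realization_img_pos Hs) Ew.
by rewrite -child_at_nth.
Qed.

Lemma ancestor_children p x : S p -> (ancestor E p x <->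
  ancestor_eq E (child_at p false) x \/ ancestor_eq E (child_at p true) x).
Proof.
move=> Sp; split=> [Ha|[] /(ancestor_eq_child Sp) //].
have [c Hc Hcx] := ancestor_first_edge Ha; rewrite (child_at_nth Hc) in Hcx.
by case: (nth _ _ _) Hcx => Hcx; [right|left].
Qed.

Lemma ancestor_children_disjoint p x : S p ->
  ~ (ancestor_eq E (child_at p false) x /\ ancestor_eq E (child_at p true) x).
Proof.
move=> Sp [H0 H1]; have side b : ancestor_eq E (child_at p b) x -> nth false x (size p) = b.
  move=> /ancestor_eq_prefix; have [_ Hp] := child_atP b Sp.
  by move=> /(prefix_trans Hp) /(rcons_prefixP false) [].
by have := side _ H0; rewrite (side _ H1).
Qed.

Lemma realizes_count z t i : realizes z t ->
  count_mem i (leaves t) = holds (ancestor_eq E z (leaf_pos i)).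
Proof.
elim=> [z' i' NS Hi|z' l r Sz _ IHl _ IHr].
  rewrite /= addn0; case: holdsP => [[Ez|/(ancestor_top HC) //]|Hn].
    by rewrite (leaf_pos_uniq Hi) in Ez; rewrite (leaf_pos_inj Ez) eqxx.
  by case: eqP => // Ei; case: Hn; left; rewrite (leaf_pos_uniq Hi) Ei.
rewrite /= count_cat IHl IHr; set x := leaf_pos i.
have Hzx : z' <> x.
  by move=> Ex; apply: (innerT_leaf (config_innerT HC Sz)); rewrite Ex subt_leaf_pos.
have Hex := ancestor_children_disjoint (x := x) Sz.
have Hiff := ancestor_children x Sz.
case: holdsP => H0; case: holdsP => H1; case: holdsP => H2 //; try by case: Hex.
- by case: H2; right; apply/Hiff; left.
- by case: H2; right; apply/Hiff; right.
- by case: H2 => [/Hzx|/Hiff []].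
Qed.

Lemma realization_forest : is_forest realization.
Proof.
move=> i; rewrite count_flatten /realization -!map_comp; set x := leaf_pos i.
have [r0 Hr0 Hr0x] := root_exists (or_intror (ex_intro _ i (subt_leaf_pos i)) : is_node S x).
transitivity (sumn [seq nat_of_bool (holds (ancestor_eq E r x)) | r <- roots]).
  by congr sumn; apply/eq_in_map => r /mem_roots Hr /=; apply: realizes_count (root_realizes Hr).
rewrite (sumn_count (fun r => holds (ancestor_eq E r x))) (eq_in_count (a2 := pred1 r0)).
  by rewrite count_uniq_mem ?roots_uniq //; move/mem_roots: Hr0 => ->.
move=> r /mem_roots Hr /=; apply/holdsP/eqP => [Hrx|->//].
exact: root_uniq Hr Hr0 Hrx Hr0x.
Qed.

End Realization.

Lemma config_realizable S E : config S E ->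
  exists X chi, [/\ is_forest X, embeds X [:: T] chi,
    forall q, inner_img X chi q <-> S q & forall z p, edge_img X chi z p <-> E z p].
Proof.
move=> HC; exists (realization S E), (realization_embedding S E); split.
- exact: realization_forest.
- exact: realization_embeds.
- exact: realization_inner_img.
- exact: realization_edge_img.
Qed.

(** * Inserting a vertex *)

Section Insertion.
Variables (SF : seq bool -> Prop) (EF : seq bool -> seq bool -> Prop).
Hypothesis HF : config SF EF.
Variable m : seq bool.
Hypothesis Hm_inner : innerT T m.
Hypothesis Hm_notin : ~ SF m.
Hypothesis Hm_min : forall q, innerT T q -> proper_prefix m q -> SF q.

Definition m_child b := rcons m b.

Definition m_side p := nth false m (size p).

(* Inserting m subdivides the paths of F from the vertices [above_m] down to the children of
   m; these paths merge into the single path [chain] through m. *)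
Definition above_m c := SF c /\ exists b, ancestor EF c (m_child b).

Definition chain z := above_m z \/ z = m.

Definition insS q := SF q \/ q = m.

Definition insE z p :=
  [\/ exists b, z = m_child b /\ p = m,
      [/\ chain z, above_m p, size p < size z &
          forall c, chain c -> size c < size z -> size c <= size p] |
      [/\ forall b, z <> m_child b, ~ above_m z & EF z p]].

Lemma m_child_below b : proper_prefix m (m_child b).
Proof. by rewrite /proper_prefix /m_child prefix_rcons size_rcons ltnSn. Qed.

Lemma m_child_node b : is_node SF (m_child b).
Proof.
move: Hm_inner; rewrite /innerT /is_inner subF_T => Hm.
have [s Hs] : exists s, subt T (m_child b) = Some s.
  by rewrite /m_child subt_rcons; case: (subt T m) Hm => [[i|l r]|] //= _; eexists.
case: s Hs => [i|l r] Hs; first by right; exists i.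
by left; apply: Hm_min (m_child_below b); rewrite /innerT /is_inner subF_T Hs.
Qed.

Lemma m_not_node : ~ is_node SF m.
Proof. by case=> [//|[i Hi]]; apply: innerT_leaf Hm_inner Hi. Qed.

Lemma above_m_below c : above_m c -> proper_prefix c m.
Proof.
move=> [Sc [b /(ancestor_proper_prefix HF) /andP [Hcm]]]; rewrite /m_child size_rcons ltnS => Hs.
by apply: prefix_neq_proper (prefix_rcons_size Hcm Hs) _ => Emc; apply: Hm_notin; rewrite Emc.
Qed.

Lemma chain_prefix z : chain z -> prefix z m.
Proof. by case=> [/above_m_below /andP []|->] //; apply: prefix_refl. Qed.

Lemma chain_size_inj z z' : chain z -> chain z' -> size z = size z' -> z = z'.
Proof. by move=> /chain_prefix Hz /chain_prefix Hz'; apply: (prefix_size_inj Hz Hz'). Qed.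

Lemma chain_neq_m_child z b : chain z -> z <> m_child b.
Proof. by move=> /chain_prefix /size_prefix + Ez; rewrite Ez /m_child size_rcons ltnn. Qed.

Lemma chain_side p z : above_m p -> chain z -> size p < size z ->
  prefix (rcons p (m_side p)) z.
Proof.
move=> Hp Hz Hs; apply/(rcons_prefixP false); split.
  rewrite /proper_prefix Hs andbT.
  exact: (prefix_of_size (chain_prefix (or_introl Hp)) (chain_prefix Hz) (ltnW Hs)).
by rewrite /m_side (prefix_nth _ (chain_prefix Hz) Hs).
Qed.

Lemma m_child_side p b : above_m p -> prefix (rcons p (m_side p)) (m_child b).
Proof.
move=> Hp; apply: prefix_trans (prefix_rcons m b).
by apply: (chain_side Hp (or_intror erefl)); case/andP: (above_m_below Hp).
Qed.

Lemma above_m_parent c q : above_m c -> EF c q -> above_m q.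
Proof.
move=> [_ [b Ha]] Hq; split; first exact: (config_parent HF Hq).
by exists b; apply: ancestor_trans (ancestor_edge Hq) Ha.
Qed.

Lemma m_child_parent b q : EF (m_child b) q -> above_m q.
Proof. by move=> Hq; split; [apply: (config_parent HF Hq)|exists b; apply: ancestor_edge]. Qed.

Lemma above_m_side_child p : above_m p ->
  exists2 y, EF y p & prefix (rcons p (m_side p)) y /\ (above_m y \/ exists b, y = m_child b).
Proof.
move=> Hp; have [_ [b Ha]] := Hp; have [y Hy Hyb] := ancestor_first_edge Ha.
have Cy : above_m y \/ exists b, y = m_child b.
  by case: Hyb => [->|Hyb]; [right; exists b|left; split; [apply: (ancestor_top HF Hyb)|exists b]].
exists y => //; split=> //; case: Cy => [Cy|[b' ->]]; last exact: m_child_side.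
by apply: (chain_side Hp (or_introl Cy)); case/andP: (config_below HF Hy).
Qed.

Lemma chain_next p : above_m p -> exists2 z, [/\ chain z, size p < size z & insE z p] &
  forall c, chain c -> size p < size c -> size z <= size c.
Proof.
move=> Hp; have /andP [_ Hpm] := above_m_below Hp.
have Hex : exists n, holds (exists z, [/\ chain z, size p < size z & size z = n]).
  by exists (size m); apply/holdsP; exists m; split=> //; right.
case: (ex_minnP Hex) => n /holdsP [z [Hz Hpz <-]] Hmin.
have Hzmin c : chain c -> size p < size c -> size z <= size c.
  by move=> Hc Hpc; apply: Hmin; apply/holdsP; exists c.
exists z => //; split=> //; constructor 2; split=> // c Hc Hcz.
by rewrite leqNgt; apply/negP => /(Hzmin c Hc); rewrite leqNgt Hcz.
Qed.

Lemma chain_ancestor p z : above_m p -> chain z -> size p < size z -> ancestor insE p z.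
Proof.
move=> + Hz; move: {2}(size z - size p) (leqnn (size z - size p)) => n.
elim: n p => [|n IH] p Hn Hp Hs; first by move: Hn; rewrite leqn0 subn_eq0 leqNgt Hs.
have [z0 [Hz0 Hpz0 Hz0p] Hmin] := chain_next Hp.
have := Hmin z Hz Hs; rewrite leq_eqVlt => /orP [/eqP Esz|Hlt].
  by rewrite -(chain_size_inj Hz0 Hz Esz); apply: ancestor_edge.
case: Hz0 => [Hz0|Ez0].
  apply: ancestor_trans (ancestor_edge Hz0p) (IH z0 _ Hz0 Hlt).
  by move: Hn Hpz0; clear; lia.
by move: (leq_trans Hlt (size_prefix (chain_prefix Hz))); rewrite Ez0 ltnn.
Qed.

Lemma insE_m z : insE z m -> exists b, z = m_child b.
Proof.
case=> [[b [-> _]]|[_ /above_m_below /andP [_ Hs] _ _]|[_ _ /(config_parent HF) //]].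
  by exists b.
by rewrite ltnn in Hs.
Qed.

Lemma insE_m_side z p : insE z p -> above_m p -> prefix (rcons p (m_side p)) z ->
  [/\ chain z, size p < size z & forall c, chain c -> size c < size z -> size c <= size p].
Proof.
case=> [[b [_ ->]]|[]|[Hnb Hnc Hf]] // Hp Hz; first by case/andP: (above_m_below Hp); rewrite ltnn.
have [y Hy [Hyp Cy]] := above_m_side_child Hp.
rewrite (config_child_uniq HF Hf Hy Hz Hyp) in Hnb Hnc.
by case: Cy => [/Hnc|[b /Hnb]].
Qed.

Lemma insE_off_side z p b : insE z p -> above_m p -> prefix (rcons p b) z ->
  b != m_side p -> EF z p.
Proof.
case=> [[b' [_ ->]]|[Hz _ Hs _]|[_ _ //]] Hp Hzb.
  by case/andP: (above_m_below Hp); rewrite ltnn.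
by rewrite (prefix_rcons_inj Hzb (chain_side Hp Hz Hs)) eqxx.
Qed.

Lemma insE_off_chain z p : insE z p -> SF p -> ~ above_m p -> EF z p.
Proof. by case=> [[b [_ ->]]|[_ Hp _ _]|[_ _ //]]. Qed.

Lemma insE_parent z p : insE z p -> insS p.
Proof.
by case=> [[b [_ ->]]|[_ [Sp _] _ _]|[_ _ /(config_parent HF) Sp]]; [right|left|left].
Qed.

Lemma insE_below z p : insE z p -> proper_prefix p z.
Proof.
case=> [[b [-> ->]]|[Hz Hp Hs _]|[_ _ /(config_below HF) //]]; first exact: m_child_below.
rewrite /proper_prefix Hs andbT.
exact: (prefix_of_size (chain_prefix (or_introl Hp)) (chain_prefix Hz) (ltnW Hs)).
Qed.

Lemma insE_node z p : insE z p -> is_node insS z.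
Proof.
have node_ins q : is_node SF q -> is_node insS q by case=> [Sq|Hq]; [left; left|right].
case=> [[b [-> _]]|[[[Sz _]|->] _ _ _]|[_ _ /(config_node HF) /node_ins //]].
- exact/node_ins/m_child_node.
- by left; left.
- by left; right.
Qed.

Lemma insE_parent_uniq z p p' : insE z p -> insE z p' -> p = p'.
Proof.
case=> [[b [Ez ->]]|[Hz Hp Hs Hmax]|[Hnb Hnc Hf]];
  case=> [[b' [Ez' ->]]|[Hz' Hp' Hs' Hmax']|[Hnb' Hnc' Hf']] //.
- by case: (chain_neq_m_child Hz' Ez).
- by case: (Hnb' b).
- by case: (chain_neq_m_child Hz Ez').
- apply: chain_size_inj (or_introl Hp) (or_introl Hp') _.
  by apply/eqP; rewrite eqn_leq (Hmax _ (or_introl Hp') Hs') (Hmax' _ (or_introl Hp) Hs).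
- case: Hz => [/Hnc' //|Ezm]; case: m_not_node.
  by rewrite -Ezm; apply: (config_node HF Hf').
- by case: (Hnb b').
- case: Hz' => [/Hnc //|Ezm]; case: m_not_node.
  by rewrite -Ezm; apply: (config_node HF Hf).
- exact: (config_parent_uniq HF Hf Hf').
Qed.

Lemma insE_child_ex p b : insS p -> exists2 z, insE z p & prefix (rcons p b) z.
Proof.
case=> [Sp|->]; last by exists (m_child b); [constructor 1; exists b|apply: prefix_refl].
have [z Hz Hzp] := config_child_ex HF b Sp.
have F_edge : (forall b', z <> m_child b') -> ~ above_m z ->
    exists2 z, insE z p & prefix (rcons p b) z.
  by move=> Hnb Hnc; exists z => //; constructor 3.
case: (classic (above_m p)) => Hp; last first.
  apply: F_edge => [b' Ez|Hz']; apply: Hp; last exact: above_m_parent Hz' Hz.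
  by apply: (m_child_parent (b := b')); rewrite -Ez.
case: (eqVneq b (m_side p)) => [->|Hb].
  have [z0 [Hz0 Hpz0 Hz0p] _] := chain_next Hp.
  by exists z0 => //; apply: chain_side.
have side_z : prefix (rcons p (m_side p)) z -> False.
  by move/(prefix_rcons_inj Hzp) => Eb; rewrite Eb eqxx in Hb.
apply: F_edge => [b' Ez|Hz']; apply: side_z; first by rewrite Ez; apply: m_child_side.
by apply: (chain_side Hp (or_introl Hz')); case/andP: (config_below HF Hz).
Qed.

Lemma insE_child_uniq z z' p b : insE z p -> insE z' p ->
  prefix (rcons p b) z -> prefix (rcons p b) z' -> z = z'.
Proof.
move=> H H' Hz Hz'; case: (insE_parent H) => [Sp|Epm]; last first.
  subst p; have [b1 E1] := insE_m H; have [b2 E2] := insE_m H'; subst z z'.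
  by rewrite -(prefix_rcons_inj Hz (prefix_refl _)) -(prefix_rcons_inj Hz' (prefix_refl _)).
case: (classic (above_m p)) => Hp.
  case: (eqVneq b (m_side p)) => [Eb|Hb]; last first.
    exact: (config_child_uniq HF (insE_off_side H Hp Hz Hb) (insE_off_side H' Hp Hz' Hb) Hz Hz').
  subst b; have [Cz Hs Hmax] := insE_m_side H Hp Hz; have [Cz' Hs' Hmax'] := insE_m_side H' Hp Hz'.
  apply: (chain_size_inj Cz Cz'); apply/eqP; rewrite eqn_leq.
  apply/andP; split; rewrite leqNgt; apply/negP.
    by move=> /(Hmax _ Cz'); rewrite leqNgt Hs'.
  by move=> /(Hmax' _ Cz); rewrite leqNgt Hs.
exact: (config_child_uniq HF (insE_off_chain H Sp Hp) (insE_off_chain H' Sp Hp) Hz Hz').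
Qed.

Lemma config_insert : config insS insE.
Proof.
split.
- by move=> p [/(config_innerT HF)|->].
- exact: insE_parent.
- exact: insE_below.
- exact: insE_node.
- exact: insE_parent_uniq.
- exact: insE_child_ex.
- exact: insE_child_uniq.
Qed.

Lemma EF_ancestor_insE z p : EF z p -> ancestor insE p z.
Proof.
move=> Hf; case: (classic (exists b, z = m_child b)) => [[b Ez]|Hnb].
  subst z; have Hp := m_child_parent Hf.
  apply: (@ancestor_trans _ _ p m); last by apply: ancestor_edge; constructor 1; exists b.
  by apply: (chain_ancestor Hp (or_intror erefl)); case/andP: (above_m_below Hp).
case: (classic (above_m z)) => [Hz|Hnz].
  apply: (chain_ancestor (above_m_parent Hz Hf) (or_introl Hz)).
  by case/andP: (config_below HF Hf).
by apply: ancestor_edge; constructor 3; split=> // b Eb; apply: Hnb; exists b.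
Qed.

Section Uniqueness.
Variables (S' : seq bool -> Prop) (E' : seq bool -> seq bool -> Prop).
Hypothesis H' : config S' E'.
Hypothesis HS' : forall q, S' q <-> insS q.
Hypothesis HE' : forall z p, EF z p -> ancestor E' p z.

(* m is inner in T and every inner vertex of T below m is already in F, so the only
   possible children of m are those of T *)
Lemma m_child_edge b : E' (m_child b) m.
Proof.
have [z Hz Hzp] := config_child_ex H' b (proj2 (HS' m) (or_intror erefl)).
case: (eqVneq z (m_child b)) => [<- //|Hne].
have Hsb : proper_prefix (m_child b) z := prefix_neq_proper Hzp (elimN eqP Hne).
have NzF : is_node SF z.
  case: (config_node H' Hz) => [/HS' [//|Ezm]|Hleaf]; [by left| |by right].
  by move: Hsb; rewrite Ezm => /andP [_]; rewrite /m_child size_rcons ltnNge leqnSn.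
have [s Hs] := node_subt HF NzF.
case: (m_child_node b) => [Sc|[i Hi]]; last first.
  by case/negP: Hne; apply/eqP; apply: (subt_leaf_prefix Hi _ Hs); case/andP: Hsb.
have Fc : full SF (m_child b) by move=> q Iq /(rcons_prefixP false) [Hmq _]; apply: Hm_min Iq Hmq.
have [q Hq Pq] := full_parent HF Sc Fc NzF Hsb.
have [q' Hq' Hor] := ancestor_last_edge (HE' Hq).
rewrite (config_parent_uniq H' Hq' Hz) in Hor.
have Hsq := size_prefix Pq; rewrite /m_child size_rcons in Hsq.
case: Hor => [Eq|Ha]; first by move: Hsq; rewrite -Eq ltnn.
have /andP [_ Hs'] := ancestor_proper_prefix H' Ha.
by have := ltn_trans Hsq Hs'; rewrite ltnn.
Qed.

Lemma above_m_ancestor c : above_m c -> ancestor E' c m.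
Proof.
move=> [Sc [b Ha]]; have [q Hq Hor] := ancestor_last_edge (ancestor_lift HE' Ha).
rewrite (config_parent_uniq H' Hq (m_child_edge b)) in Hor.
by case: Hor => [Emc|//]; case: Hm_notin; rewrite Emc.
Qed.

Lemma insE_ancestor z p : insE z p -> ancestor E' p z.
Proof.
case=> [[b [-> ->]]|[[Hz|->] Hp Hs _]|[_ _ /HE' //]].
- exact: ancestor_edge (m_child_edge b).
- exact: (ancestor_chain H' (above_m_ancestor Hp) (above_m_ancestor Hz) Hs).
- exact: above_m_ancestor Hp.
Qed.

End Uniqueness.
End Insertion.

Lemma fle_inner_img X Y chiX chiY : is_forest Y -> fle X Y ->
  embeds X [:: T] chiX -> embeds Y [:: T] chiY ->
  forall q, inner_img X chiX q -> inner_img Y chiY q.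
Proof. by move=> HY [a Ha] HEX HEY; have [] := fle_config HY Ha HEX HEY. Qed.

Lemma fle_same_inner X Y chiX chiY : is_forest X -> is_forest Y ->
  embeds X [:: T] chiX -> embeds Y [:: T] chiY ->
  (forall q, inner_img X chiX q <-> inner_img Y chiY q) -> fle X Y -> fle Y X.
Proof.
move=> HX HY HEX HEY HS [a Ha]; have [_ HE] := fle_config HY Ha HEX HEY.
have rigid := config_edges_rigid (config_of_embedding HX HEX) (config_of_embedding HY HEY) HS HE.
apply: (config_fle HY HX HEY HEX) => [q /HS //|z p /rigid Hzp].
exact: ancestor_edge Hzp.
Qed.

Lemma fcovers_add_vertex F G chiF chiG m : is_forest F -> is_forest G ->
  embeds F [:: T] chiF -> embeds G [:: T] chiG -> fle F G -> ~ inner_img F chiF m ->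
  (forall q, inner_img G chiG q <-> inner_img F chiF q \/ q = m) -> fcovers F G.
Proof.
move=> HF HG HEF HEG HFG HmF HGF; split.
  split=> // HGF'; apply: HmF; apply: (fle_inner_img HF HGF' HEG HEF).
  by apply/HGF; right.
move=> [H [HH [[HFH HnHF] [HHG HnGH]]]].
have [chiH HEH] : fle H [:: T] by apply: fle_trans HG HHG _; exists chiG.
have HFH' := fle_inner_img HH HFH HEF HEH; have HHG' := fle_inner_img HG HHG HEH HEG.
case: (classic (inner_img H chiH m)) => HmH.
  apply/HnGH/(fle_same_inner HH HG HEH HEG _ HHG) => q.
  by split=> [/HHG' //|/HGF [/HFH' //|->]].
apply/HnHF/(fle_same_inner HF HH HEF HEH _ HFH) => q.
by split=> [/HFH' //|Hq]; have /HGF [//|Eqm] := HHG' _ Hq; rewrite Eqm in Hq.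
Qed.

Lemma insert_vertex F chi m : is_forest F -> embeds F [:: T] chi ->
  innerT T m -> ~ inner_img F chi m ->
  (forall q, innerT T q -> proper_prefix m q -> inner_img F chi q) ->
  exists G psi, [/\ is_forest G, embeds G [:: T] psi, fle F G,
    forall q, inner_img G psi q <-> inner_img F chi q \/ q = m &
    forall G' chi', is_forest G' -> embeds G' [:: T] chi' -> fle F G' ->
      (forall q, inner_img G' chi' q <-> inner_img F chi q \/ q = m) -> fle G G'].
Proof.
move=> HF Hchi Hmi HmS Hbelow; have HcF := config_of_embedding HF Hchi.
have [G [psi [HG HGT HGS HGE]]] := config_realizable (config_insert HcF Hmi HmS Hbelow).
exists G, psi; split=> //.
- apply: (config_fle HF HG Hchi HGT) => [q Hq|z p Hzp]; first by apply/HGS; left.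
  apply: (ancestor_lift _ (EF_ancestor_insE HcF HmS Hzp)) => z' p' /HGE Hz'.
  exact: ancestor_edge Hz'.
- move=> G' chi' HG' Hchi' [a Ha] HS'; have [_ HFE'] := fle_config HG' Ha Hchi Hchi'.
  apply: (config_fle HG HG' HGT Hchi') => [q /HGS /HS' //|z p /HGE].
  exact: (insE_ancestor HcF Hmi HmS Hbelow (config_of_embedding HG' Hchi') HS' HFE').
Qed.

Lemma nice_order_min ord m (P : seq bool -> Prop) : nice_order T ord -> m \in ord ->
  (forall x, x \in ord -> ~ P x -> index m ord <= index x ord) ->
  forall q, innerT T q -> proper_prefix m q -> P q.
Proof.
move=> [_ [Hord Hnice]] Hm Hmin q Iq /andP [Hmq Hs]; apply: NNPP => Hq.
have Hqo : q \in ord by rewrite Hord.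
have Hqm : q != m by apply: contraTneq Hs => ->; rewrite ltnn.
by have := leq_trans (Hnice q m Hqo Hm Hmq Hqm) (Hmin q Hqo Hq); rewrite ltnn.
Qed.

End BelowT.

Theorem lemma4p2 (I : finType) (T : btree I) (ord : seq (seq bool))
  (F : forest I) (m : seq bool) :
  is_forest [:: T] ->
  nice_order T ord ->
  is_forest F -> flt F [:: T] ->
  (* m = min (V(T) \ V(F)) in the nice order *)
  m \in ord -> ~ inV T F m ->
  (forall v, v \in ord -> ~ inV T F v -> (index m ord <= index v ord)%N) ->
  exists G : forest I,
    [/\ is_forest G, fle G [:: T], fcovers F G,
        (forall v, inV T G v <-> inV T F v \/ v = m) &
        (forall G' : forest I, is_forest G' -> fle G' [:: T] -> fcovers F G' ->
           (forall v, inV T G' v <-> inV T F v \/ v = m) ->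
           fle G G' /\ fle G' G)].
Proof.
move=> HT Hnice HF [[chi Hchi] _] Hm HmF Hmin.
have inV_F q : inV T F q <-> inner_img T F chi q := inV_inner_img HT q Hchi.
have HmS : ~ inner_img T F chi m by rewrite -inV_F.
have Hbelow q : innerT T q -> proper_prefix m q -> inner_img T F chi q.
  by move=> Iq Hq; apply/inV_F/(nice_order_min Hnice Hm Hmin Iq Hq).
have Hmi : innerT T m by case: Hnice => _ [<- _].
have [G [psi [HG HGT HFG HGS HG_least]]] := insert_vertex HT HF Hchi Hmi HmS Hbelow.
exists G; split=> //; first by exists psi.
- exact: (fcovers_add_vertex HT HF HG Hchi HGT HFG HmS HGS).
- by move=> v; rewrite (inV_inner_img HT v HGT) inV_F HGS.
move=> G' HG' [chi' Hchi'] [[HFG' _] _] HG'V.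
have HS' q : inner_img T G' chi' q <-> inner_img T F chi q \/ q = m.
  by rewrite -(inV_inner_img HT q Hchi') HG'V inV_F.
have HGG' := HG_least G' chi' HG' Hchi' HFG' HS'.
by split=> //; apply: (fle_same_inner HT HG HG' HGT Hchi') HGG' => q; rewrite HGS HS'.
Qed.
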